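(* Let $n\ge 2$ and let $F_{2n}$ be the cubic multigraph obtained from the cycle $C_{2n}$ by adding a parallel edge to every second edge of the cycle. Then the eigenvalues of $F_{2n}$ are $\pm\sqrt{4\cos(2\pi j/n)+5}$ for $j=0,1,\dots,n-1$. Consequently, $1$ is an eigenvalue of $F_{2n}$ if and only if $n$ is even, in which case it is a simple eigenvalue.
   Context: The adjacency matrix of a multigraph has $(x,y)$-entry equal to the number of edges joining $x$ and $y$; eigenvalues are those of this matrix. An eigenvalue is simple if its eigenspace is $1$-dimensional. *)

From HB Require Import structures.
From mathcomp Require Import all_boot all_order all_algebra.
From mathcomp Require Import reals trigo.
Set Implicit Arguments. Unset Strict Implicit. Unset Printing Implicit Defensive.
Import Order.TTheory GRing.Theory Num.Theory.
Local Open Scope ring_scope.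

(* Every second edge, namely {2k, 2k+1}, is doubled. *)
Definition cyc_adj (m : nat) (i j : nat) : bool :=
  (j == (i.+1 %% m)%N) || (i == (j.+1 %% m)%N).

Definition F_adj (R : realType) (n : nat) : 'M[R]_(n.*2) :=
  \matrix_(i < n.*2, j < n.*2)
    (if cyc_adj n.*2 i j then
       (if (i./2 == j./2)%N then 2%:R else 1%:R)
     else 0).

From HB Require Import structures.
From mathcomp Require Import all_boot all_order all_algebra.
From mathcomp Require Import fingroup perm reals trigo complex.
From mathcomp Require Import zify ring lra.

(* F_{2n} is bipartite between its even and its odd vertices.  Listing the
   even vertices first turns its adjacency matrix into [[0, B^T], [B, 0]] with
   B = 2 + S, S the cyclic shift of 'I_n.  Hence char_poly F = char_poly (B B^T)
   evaluated at X^2, and block elimination gives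
   rank (F - 1) = n + rank (B B^T - 1).  The circulant B B^T is diagonalised
   over C by the Vandermonde matrix of the n-th roots of unity w^j, with
   eigenvalues (2 + w^j) (2 + w^-j) = 4 cos (2 pi j / n) + 5.  Such an
   eigenvalue is 1 iff cos (2 pi j / n) = -1, i.e. iff 2 j = n: this happens
   for exactly one j < n when n is even and for none when n is odd. *)

Set Implicit Arguments.
Unset Strict Implicit.
Unset Printing Implicit Defensive.

Import Order.TTheory GRing.Theory Num.Theory.
Local Open Scope ring_scope.

Section MatrixFacts.
Variable F : fieldType.

Lemma mxrank_diag n (d : 'rV[F]_n) :
  \rank (diag_mx d) = #|[pred j | d 0 j != 0]|.
Proof.
suff -> : \rank (diag_mx d) = (\sum_j (d 0%R j != 0%R))%N.
  rewrite -sum1_card [RHS]big_mkcond; apply: eq_bigr => j _.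
  by rewrite inE; case: (d 0 j != 0).
elim: n d => [|n IHn] d; first by rewrite flatmx0 mxrank0 big_ord0.
change (\rank (@diag_mx _ (1 + n) d) = \sum_(j < 1 + n) (d 0%R j != 0%R))%N.
rewrite -{1}[d](@hsubmxK _ 1 1 n) diag_mx_row rank_diag_block_mx IHn.
rewrite big_split_ord big_ord1; congr (_ + _)%N; last first.
  by apply: eq_bigr => j _; rewrite mxE.
set x := d 0 _; have [x0|x0] := eqVneq x 0.
  rewrite (_ : diag_mx _ = 0) ?mxrank0 //.
  by apply/matrixP => i j; rewrite !ord1 !mxE -/x x0.
by rewrite mxrank_unit // unitmxE det_diag big_ord1 mxE unitfE.
Qed.

Lemma char_poly_conj n (P A : 'M[F]_n) : P \in unitmx ->
  char_poly (P *m A *m invmx P) = char_poly A.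
Proof.
move=> Pu; rewrite /char_poly.
set Pc := map_mx polyC P; set Qc := map_mx polyC (invmx P).
have PQ : Pc *m Qc = 1%:M by rewrite -map_mxM mulmxV // map_mx1.
have QP : Qc *m Pc = 1%:M by rewrite -map_mxM mulVmx // map_mx1.
have -> : char_poly_mx (P *m A *m invmx P) = Pc *m char_poly_mx A *m Qc.
  rewrite mulmxBr mulmxBl scalar_mxC -[_ *m Pc *m Qc]mulmxA PQ mulmx1.
  by rewrite -!map_mxM.
by rewrite !det_mulmx mulrC mulrA -det_mulmx QP det1 mul1r.
Qed.

Lemma mxrank_conj n (P A : 'M[F]_n) : P \in unitmx ->
  \rank (P *m A *m invmx P) = \rank A.
Proof.
move=> Pu; rewrite mxrankMfree ?row_free_unit ?unitmx_inv //.
by rewrite eqmxMfull // row_full_unit.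
Qed.

Lemma mxsub_perm n (s : 'S_n) (A : 'M[F]_n) :
  mxsub s s A = perm_mx s *m A *m invmx (perm_mx s).
Proof.
have -> : invmx (perm_mx s) = perm_mx s^-1 :> 'M[F]_n.
  have sV : perm_mx s *m perm_mx s^-1 = 1%:M :> 'M[F]_n.
    by rewrite -perm_mxM mulgV perm_mx1.
  by rewrite -[LHS]mulmx1 -sV mulmxA mulVmx ?unitmx_perm ?mul1mx.
by apply/matrixP => i j; rewrite -col_permE -row_permE !mxE.
Qed.

Section Reindex.
Variables (m p : nat) (f : 'I_p -> 'I_m).
Hypothesis f_bij : bijective f.

Lemma mxsub_similar_invariant T (phi : forall k, 'M[F]_k -> T) :
    (forall k (P A : 'M_k),
       P \in unitmx -> phi k (P *m A *m invmx P) = phi k A) ->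
  forall A, phi p (mxsub f f A) = phi m A.
Proof.
move=> phi_conj A; have e : p = m.
  by rewrite -[p]card_ord -[m]card_ord; apply: bij_eq_card f_bij.
case: m / e f f_bij A => g g_bij A; pose s := perm (bij_inj g_bij).
have -> : mxsub g g A = mxsub s s A by apply/matrixP => i j; rewrite !mxE !permE.
by rewrite mxsub_perm phi_conj ?unitmx_perm.
Qed.

Lemma char_poly_mxsub (A : 'M[F]_m) : char_poly (mxsub f f A) = char_poly A.
Proof.
exact: (@mxsub_similar_invariant _ (fun k => @char_poly F k) char_poly_conj).
Qed.

Lemma mxrank_mxsub (A : 'M[F]_m) : \rank (mxsub f f A) = \rank A.
Proof.
exact: (@mxsub_similar_invariant _ (fun k => @mxrank F k k) mxrank_conj).
Qed.

Lemma mxsub_sub_scalar (A : 'M[F]_m) (a : F) :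
  mxsub f f (A - a%:M) = mxsub f f A - a%:M.
Proof. by apply/matrixP => i j; rewrite !mxE (bij_eq f_bij). Qed.

End Reindex.
End MatrixFacts.

Lemma char_poly_block_antidiag (R : idomainType) m (B C : 'M[R]_m) :
  char_poly (block_mx 0 B C 0) = char_poly (C *m B) \Po 'X^2.
Proof.
rewrite /char_poly; set X := ('X : {poly R}).
set Bp := map_mx polyC B; set Cp := map_mx polyC C.
have -> : char_poly_mx (block_mx 0 B C 0) = block_mx X%:M (- Bp) (- Cp) X%:M.
  rewrite /char_poly_mx map_block_mx !map_mx0 (scalar_mx_block m m) opp_block_mx.
  by rewrite add_block_mx !subr0 !sub0r.
pose T := block_mx X%:M Bp 0 X%:M.
have detT : \det T = X ^+ m * X ^+ m by rewrite det_ublock det_scalar.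
have T_nz : \det T != 0 by rewrite detT mulf_neq0 // expf_neq0 // polyX_eq0.
have eliminate : block_mx X%:M (- Bp) (- Cp) X%:M *m T =
    block_mx (X ^+ 2)%:M 0 (- Cp *m X%:M) ((X ^+ 2)%:M - Cp *m Bp).
  rewrite /T mulmx_block !mulmx0 !addr0 -scalar_mxM -expr2 mulNmx scalar_mxC.
  by rewrite subrr [in M in block_mx _ _ _ M]mulNmx [in M in block_mx _ _ _ M]addrC.
apply: (mulIf T_nz); rewrite -det_mulmx eliminate det_lblock det_scalar detT.
rewrite mulrC -exprD -exprM addnn -mul2n mulnC -det_map_mx; congr (_ * _).
congr (\det _); apply/matrixP => i j; rewrite !mxE rmorphB /= rmorphMn /=.
rewrite comp_polyX comp_polyC; congr (_ - _); rewrite rmorph_sum.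
by apply: eq_bigr => k _; rewrite !mxE rmorphM.
Qed.

Lemma mxrank_block_antidiag_sub1 (F : fieldType) m (B C : 'M[F]_m) :
  \rank (block_mx 0 B C 0 - 1%:M) = (m + \rank (C *m B - 1%:M)%R)%N.
Proof.
pose L := block_mx 1%:M 0 C 1%:M : 'M[F]_(m + m).
pose U := block_mx 1%:M B 0 1%:M : 'M[F]_(m + m).
have L_full : row_full L.
  by rewrite row_full_unit unitmxE det_lblock det1 mul1r unitr1.
have U_free : row_free U.
  by rewrite row_free_unit unitmxE det_ublock det1 mul1r unitr1.
have eliminate : L *m (block_mx 0 B C 0 - 1%:M) *m U =
    block_mx (- 1%:M) 0 0 (C *m B - 1%:M).
  rewrite (scalar_mx_block m m) opp_block_mx add_block_mx !sub0r !subr0.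
  rewrite /L /U !mulmx_block !mul1mx !mul0mx !mulmx1 !mulmx0 ?addr0 ?add0r.
  by rewrite mulNmx mul1mx addNr mulmxN mulmx1 addNr mul0mx add0r.
rewrite -(eqmxMfull (block_mx 0 B C 0 - 1%:M) L_full) -(mxrankMfree _ U_free).
by rewrite eliminate rank_diag_block_mx mxrank_opp mxrank1.
Qed.

Definition cyc_shift n : 'S_n := perm (@ordS_inj n).

Lemma cyc_shiftVE n (i : 'I_n) : (cyc_shift n)^-1%g i = ord_pred i.
Proof.
by rewrite -[in RHS](permKV (cyc_shift n) i) [cyc_shift n _]permE ordSK.
Qed.

(* Entry (a, b) counts the edges between the odd vertex 2a+1 and the even
   vertex 2b of F_{2n}: two to 2a and one to 2a+2. *)
Definition biadj (T : pzRingType) n : 'M[T]_n := 2%:M + perm_mx (cyc_shift n).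

Lemma map_biadj (T T' : pzRingType) (f : {rmorphism T -> T'}) n :
  map_mx f (biadj T n) = biadj T' n.
Proof. by rewrite map_mxD map_scalar_mx rmorph_nat map_perm_mx. Qed.

Lemma ordS_neq n (hn : (1 < n)%N) (a : 'I_n) : ordS a != a.
Proof.
apply/eqP => /(congr1 val) /=; move: (nat_of_ord a) (ltn_ord a) => x xn.
by case: (ltngtP x.+1 n) => [lt|gt|eq];
  [rewrite modn_small | | rewrite eq modnn]; lia.
Qed.

Lemma biadjE (T : pzRingType) n (hn : (1 < n)%N) (a b : 'I_n) :
  biadj T n a b = if a == b then 2 else if ordS a == b then 1 else 0.
Proof.
rewrite !mxE permE; have [<-|ab] := eqVneq a b.
  by rewrite (negbTE (ordS_neq hn a)) addr0.
by case: (ordS a == b); rewrite mulr0n add0r.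
Qed.

Section ShiftVandermonde.
Variables (T : comPzRingType) (n : nat) (a : 'rV[T]_n).
Hypothesis a_unity : forall j, a 0 j ^+ n = 1.
Local Notation V := (Vandermonde n a).

Lemma cyc_shift_Vandermonde :
  perm_mx (cyc_shift n) *m V = V *m diag_mx a.
Proof.
apply/matrixP => i j; rewrite -row_permE mul_mx_diag !mxE permE /=.
by rewrite expr_mod // exprSr.
Qed.

Lemma cyc_shiftT_Vandermonde :
  (perm_mx (cyc_shift n))^T *m V = V *m diag_mx (\row_j a 0 j ^+ n.-1).
Proof.
apply/matrixP => i j; rewrite tr_perm_mx -row_permE mul_mx_diag !mxE.
rewrite cyc_shiftVE /= expr_mod // -exprD; congr (_ ^+ _).
by have := ltn_ord i; lia.
Qed.

Lemma eigenbasis_add_scalar (A : 'M[T]_n) (d : 'rV_n) (c : T) :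
  A *m V = V *m diag_mx d -> (c%:M + A) *m V = V *m diag_mx (const_mx c + d).
Proof.
move=> AV; rewrite mulmxDl AV raddfD /= diag_const_mx mulmxDr.
by rewrite mul_scalar_mx mul_mx_scalar.
Qed.

Lemma biadj_gram_Vandermonde :
  biadj T n *m (biadj T n)^T *m V =
    V *m diag_mx (\row_j ((2 + a 0 j) * (2 + a 0 j ^+ n.-1))).
Proof.
rewrite /biadj -mulmxA linearD /= tr_scalar_mx.
rewrite (eigenbasis_add_scalar 2 cyc_shiftT_Vandermonde) mulmxA.
rewrite (eigenbasis_add_scalar 2 cyc_shift_Vandermonde) -mulmxA mulmx_diag.
by congr (_ *m diag_mx _); apply/matrixP => i j; rewrite !mxE.
Qed.

End ShiftVandermonde.

Section UnitCircle.
Variable R : realType.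
Local Open Scope complex_scope.

Definition expi (x : R) : R[i] := cos x +i* sin x.

Lemma expiD (x y : R) : expi (x + y) = expi x * expi y.
Proof. by rewrite /expi cosD sinD /=; congr (_ +i* _); ring. Qed.

Lemma expi0 : expi 0 = 1.
Proof. by rewrite /expi cos0 sin0. Qed.

Lemma expi2pi : expi (pi *+ 2) = 1.
Proof. by rewrite /expi cos2pi sin2pi. Qed.

Lemma expiMn (x : R) k : expi x ^+ k = expi (x *+ k).
Proof. by elim: k => [|k IHk]; rewrite ?expi0 // exprS IHk -expiD mulrS. Qed.

Lemma expiNK (x : R) : expi x * expi (- x) = 1.
Proof. by rewrite -expiD subrr expi0. Qed.

Lemma mul_2Dexpi_2DexpiN (x : R) :
  (2 + expi x) * (2 + expi (- x)) = (4 * cos x + 5)%:C.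
Proof.
have cs := cos2Dsin2 x.
rewrite -[2 : R[i]](rmorph_nat (real_complex R)) /expi cosN sinN /=.
congr (_ +i* _); nra.
Qed.

Lemma cos_eq_02pi (x y : R) : 0 <= x <= pi -> 0 <= y < pi *+ 2 ->
  cos y = cos x -> y = x \/ y = pi *+ 2 - x.
Proof.
have pi0 := @pi_gt0 R; rewrite mulr2n => /andP[x0 xpi] /andP[y0 y2pi] cyx.
have x_in : x \in `[0, pi] by rewrite in_itv /= x0.
case: (lerP y pi) => ypi.
  by left; apply: cos_inj => //; rewrite in_itv /= y0.
right; suff : pi + pi - y = x by lra.
apply: cos_inj => //; first by rewrite in_itv /=; apply/andP; split; lra.
by rewrite addrC -mulr2n cosD2pi cosN.
Qed.

End UnitCircle.

Definition gram_eig (R : realType) n (j : nat) : R :=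
  4 * cos (2 * pi * j%:R / n%:R) + 5.

Definition omega (R : realType) n : R[i] := expi (2 * pi / n%:R).

Section RootsOfUnity.
Variables (R : realType) (n : nat).
Hypothesis n_gt0 : (0 < n)%N.
Local Open Scope complex_scope.
Local Notation angle j := (2 * pi * j%:R / n%:R : R).
Local Notation w := (omega R n).

Lemma angle_bounds j : (j < n)%N -> 0 <= angle j < pi *+ 2.
Proof.
move=> jn; have pi0 := @pi_gt0 R; have n0 : (0 : R) < n%:R by rewrite ltr0n.
have q_lt1 : j%:R / n%:R < 1 :> R by rewrite ltr_pdivrMr // mul1r ltr_nat.
have q_ge0 : 0 <= j%:R / n%:R :> R by rewrite divr_ge0 // ltW.
rewrite -mulrA mulr2n; apply/andP; split; nra.
Qed.

Lemma omega_exp j : w ^+ j = expi (angle j).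
Proof. by rewrite /omega expiMn -[_ *+ j]mulr_natr mulrAC. Qed.

Lemma omega_prim : n.-primitive_root w.
Proof.
rewrite /primitive_root_of_unity n_gt0; apply/forallP => i; apply/eqP.
rewrite unity_rootE omega_exp; have [ein|ne] := eqVneq i.+1 n.
  by rewrite ein mulfK ?pnatr_eq0 -?lt0n // mulr_natl expi2pi eqxx.
apply/negbTE/negP; rewrite /expi eq_complex /= => /andP[/eqP cos1 _].
have i1n : (i.+1 < n)%N by rewrite ltn_neqAle ne ltn_ord.
have pi0 := @pi_gt0 R; have n0 : (0 : R) < n%:R by rewrite ltr0n.
have a_gt0 : 0 < angle i.+1 by rewrite divr_gt0 // !mulr_gt0 // ltr0n.
have /andP[_ a_lt] := angle_bounds i1n.
have [||] := cos_eq_02pi _ (angle_bounds i1n) (etrans cos1 (esym (cos0 R))); lra.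
Qed.

Lemma omega_gram_eig j :
  (2 + w ^+ j) * (2 + (w ^+ j) ^+ n.-1) = (gram_eig R n j)%:C.
Proof.
have inv : (w ^+ j) ^+ n.-1 = expi (- angle j).
  rewrite -[LHS]mulr1 -(expiNK (angle j)) -omega_exp mulrA -exprSr prednK //.
  by rewrite exprAC (prim_expr_order omega_prim) expr1n mul1r.
by rewrite inv omega_exp mul_2Dexpi_2DexpiN.
Qed.

Lemma cos_angle_eqN1 j : (j < n)%N -> (cos (angle j) == -1) = (j.*2 == n).
Proof.
move=> jn; have pi0 := @pi_gt0 R.
have n0 : (n%:R : R) != 0 by rewrite pnatr_eq0 -lt0n.
apply/eqP/eqP => [cosN1 | nE]; last first.
  have j0 : (j%:R : R) != 0 by rewrite pnatr_eq0 -lt0n -double_gt0 nE.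
  rewrite -nE -muln2 natrM (_ : _ / _ = pi) ?cospi //; field; exact j0.
have angle_pi : angle j = pi.
  have [||] := cos_eq_02pi _ (angle_bounds jn)
    (etrans cosN1 (esym (cospi R))) => //.
    by rewrite lexx ltW.
  by rewrite mulr2n addrK.
apply/eqP; rewrite -(eqr_nat R) -muln2 natrM; apply/eqP.
by apply: (mulfI (lt0r_neq0 pi0)); rewrite -[in RHS]angle_pi; field.
Qed.

Lemma card_gram_eig_eq1 : #|[pred j : 'I_n | gram_eig R n j == 1]| = ~~ odd n.
Proof.
rewrite (@eq_card _ _ [pred j : 'I_n | j.*2 == n]) => [|j]; last first.
  by rewrite !inE -cos_angle_eqN1 // /gram_eig; apply/eqP/eqP; lra.
have [odd_n|even_n] /= := boolP (odd n).
  apply: eq_card0 => j; rewrite !inE.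
  by apply: contraTF odd_n => /eqP <-; rewrite odd_double.
have nE : (n./2).*2 = n by rewrite -[RHS]odd_double_half (negbTE even_n).
have half_lt : (n./2 < n)%N by rewrite ltn_half_double -addnn; lia.
rewrite (@eq_card _ _ (pred1 (Ordinal half_lt))) ?card1 // => j.
by rewrite !inE -val_eqE /= -[X in _ == X]nE (inj_eq double_inj).
Qed.

End RootsOfUnity.

Definition dft_mx (R : realType) n : 'M[R[i]]_n :=
  Vandermonde n (\row_(j < n) omega R n ^+ j).

Section GramSpectrum.
Variables (R : realType) (n : nat).
Hypothesis n_gt0 : (0 < n)%N.
Local Open Scope complex_scope.
Local Notation V := (dft_mx R n).
Local Notation K := (biadj R n *m (biadj R n)^T).
Local Notation eigs := (\row_(j < n) (gram_eig R n j)%:C).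

Lemma dft_mx_unit : V \in unitmx.
Proof.
rewrite unitmxE det_Vandermonde unitfE; apply/prodf_neq0 => i _.
apply/prodf_neq0 => j ij.
rewrite !mxE subr_eq0 (eq_prim_root_expr (omega_prim R n_gt0)).
by rewrite !modn_small // neq_ltn ij orbT.
Qed.

Lemma gram_biadj_similar :
  map_mx (real_complex R) K = V *m diag_mx eigs *m invmx V.
Proof.
apply: (canRL (mulmxK dft_mx_unit)); rewrite map_mxM -map_trmx map_biadj.
rewrite biadj_gram_Vandermonde; last first.
  by move=> j; rewrite mxE exprAC (prim_expr_order (omega_prim R n_gt0)) expr1n.
by congr (_ *m diag_mx _); apply/matrixP => i j; rewrite !mxE omega_gram_eig.
Qed.

Lemma char_poly_gram : char_poly K = \prod_(j < n) ('X - (gram_eig R n j)%:P).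
Proof.
apply: (@map_poly_inj _ _ (real_complex R)).
rewrite map_char_poly gram_biadj_similar char_poly_conj ?dft_mx_unit //.
rewrite char_poly_trig ?diag_mx_is_trig // rmorph_prod.
by apply: eq_bigr => j _; rewrite !mxE eqxx mulr1n rmorphB /= map_polyX map_polyC.
Qed.

Lemma mxrank_gram_sub1 :
  \rank (K - 1%:M) = #|[pred j : 'I_n | gram_eig R n j != 1]|.
Proof.
rewrite -(mxrank_map (real_complex R)) map_mxB map_mx1 gram_biadj_similar.
rewrite -[X in _ - X](mulmxV dft_mx_unit) -[X in _ - X *m _]mulmx1.
rewrite -mulmxBl -mulmxBr.
rewrite mxrank_conj ?dft_mx_unit // -diag_const_mx -raddfB mxrank_diag.
apply: eq_card => j; rewrite !inE !mxE -(rmorph1 (real_complex R)) -rmorphB.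
by rewrite fmorph_eq0 subr_eq0.
Qed.

End GramSpectrum.

Section CycleInterleaving.
Variable m : nat.

Lemma cyc_adjC x y : cyc_adj m.*2 x y = cyc_adj m.*2 y x.
Proof. by rewrite /cyc_adj orbC. Qed.

Let double1_mod x : (x < m)%N -> (x.*2.+1 %% m.*2 = x.*2.+1)%N.
Proof. by move=> xm; rewrite modn_small //; lia. Qed.

Let double2_mod x : (x.*2.+2 %% m.*2 = (x.+1 %% m).*2)%N.
Proof. by rewrite -!muln2 muln_modl. Qed.

Lemma cyc_adj_even_even a b : (a < m)%N -> (b < m)%N ->
  cyc_adj m.*2 a.*2 b.*2 = false.
Proof.
move=> am bm; rewrite /cyc_adj !double1_mod //.
by apply/norP; split; apply/eqP; lia.
Qed.

Lemma cyc_adj_odd_odd a b : cyc_adj m.*2 a.*2.+1 b.*2.+1 = false.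
Proof. by rewrite /cyc_adj !double2_mod; apply/norP; split; apply/eqP; lia. Qed.

Lemma cyc_adj_even_odd a b : (a < m)%N ->
  cyc_adj m.*2 a.*2 b.*2.+1 = (a == b) || (a == b.+1 %% m)%N.
Proof.
move=> am; rewrite /cyc_adj double1_mod // double2_mod eqSS.
by rewrite !(inj_eq double_inj) eq_sym.
Qed.

End CycleInterleaving.

Fact interleave_subproof n (i : 'I_(n + n)) :
  ((if i < n then i.*2 else (i - n).*2.+1) < n.*2)%N.
Proof. by have := ltn_ord i; case: (ltnP i n) => *; lia. Qed.

Definition interleave n (i : 'I_(n + n)) : 'I_n.*2 :=
  Ordinal (interleave_subproof i).

Lemma interleave_lshift n (a : 'I_n) : interleave (lshift n a) = a.*2 :> nat.
Proof. by rewrite /= ltn_ord. Qed.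

Lemma interleave_rshift n (a : 'I_n) : interleave (rshift n a) = a.*2.+1 :> nat.
Proof. by rewrite /= ltnNge leq_addr /= addKn. Qed.

Lemma interleave_bij n : bijective (@interleave n).
Proof.
apply: inj_card_bij; last by rewrite !card_ord addnn.
move=> i j /(congr1 val) /=; have := ltn_ord i; have := ltn_ord j.
by case: (ltnP i n); case: (ltnP j n) => *; apply: ord_inj; lia.
Qed.

Lemma F_adj_interleave (R : realType) n (hn : (1 < n)%N) :
  mxsub (@interleave n) (@interleave n) (F_adj R n) =
    block_mx 0 (biadj R n)^T (biadj R n) 0.
Proof.
apply/matrixP => i j; rewrite -(splitK i) -(splitK j).
case: (split i) => a; case: (split j) => b /=;
  rewrite ?block_mxEul ?block_mxEur ?block_mxEdl ?block_mxEdr [LHS]mxE /F_adj mxE;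
  rewrite ?interleave_lshift ?interleave_rshift /= ?uphalf_double ?doubleK.
- by rewrite cyc_adj_even_even // mxE.
- rewrite [(biadj R n)^T a b]mxE cyc_adj_even_odd // biadjE // -!val_eqE /=.
  by rewrite !(eq_sym (a : nat)); case: (b == a :> nat).
- rewrite cyc_adjC cyc_adj_even_odd // biadjE // -!val_eqE /=.
  by rewrite !(eq_sym (b : nat)); case: (a == b :> nat).
- by rewrite cyc_adj_odd_odd mxE.
Qed.

Section Spectrum.
Variables (R : realType) (n : nat).
Hypothesis hn : (1 < n)%N.
Let n_gt0 : (0 < n)%N := ltnW hn.

Lemma char_poly_F_adj :
  char_poly (F_adj R n) = \prod_(j < n) ('X^2 - (gram_eig R n j)%:P).
Proof.
rewrite -(char_poly_mxsub (interleave_bij n)) F_adj_interleave //.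
rewrite char_poly_block_antidiag char_poly_gram // rmorph_prod.
by apply: eq_bigr => j _; rewrite rmorphB /= comp_polyX comp_polyC.
Qed.

Lemma mxrank_eigenspace_F_adj1 : \rank (eigenspace (F_adj R n) 1) = ~~ odd n.
Proof.
rewrite mxrank_ker -(mxrank_mxsub (interleave_bij n)).
rewrite (mxsub_sub_scalar (interleave_bij n)).
rewrite F_adj_interleave // mxrank_block_antidiag_sub1 mxrank_gram_sub1 //.
rewrite -(card_gram_eig_eq1 R n_gt0) -addnn subnDA addKn.
rewrite -[X in (X - _)%N](card_ord n).
by rewrite -(cardC [pred j : 'I_n | gram_eig R n j == 1]) addnK.
Qed.

End Spectrum.

Theorem proposition6p1 (R : realType) (n : nat) (hn : (2 <= n)%N) :
  char_poly (F_adj R n) =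
    \prod_(j < n)
       (('X - (Num.sqrt (4 * cos (2 * pi * j%:R / n%:R) + 5))%:P) *
        ('X + (Num.sqrt (4 * cos (2 * pi * j%:R / n%:R) + 5))%:P))
  /\ (eigenvalue (F_adj R n) 1 <-> ~~ odd n)
  /\ (~~ odd n -> \rank (eigenspace (F_adj R n) 1) = 1%N).
Proof.
have rk := mxrank_eigenspace_F_adj1 R hn.
split; last split.
- rewrite char_poly_F_adj //; apply: eq_bigr => j _.
  have := cos_geN1 (2 * pi * j%:R / n%:R : R) => cos_ge.
  by rewrite -subr_sqr -rmorphXn /= sqr_sqrtr //; lra.
- by rewrite /eigenvalue -mxrank_eq0 rk; case: (odd n).
- by rewrite rk => ->.
Qed.
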